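(* Let $d\geq1$ be an integer, $j\in\{0,\dots,d-1\}$, $\beta>0$, and let $\kappa,\Delta,\gamma,\delta>0$ satisfy $$\kappa^2=\frac{\gamma^2}{\lambda(\gamma,\delta)}=\tanh\beta,\qquad \Delta^2=\frac{\delta^2}{\lambda(\gamma,\delta)}\Big(1-\frac{\gamma^2\delta^2}{2\lambda(\gamma,\delta)}\Big)^{-2}=\sinh\beta\cosh\beta,\qquad \gamma^2=\delta^2=2\tanh\frac{\beta}{2},$$ where $\lambda(\gamma,\delta)=1+\frac{\gamma^2\delta^2}{4}$. Then $$\hat S\big(\ln\sqrt{1+\kappa^2\Delta^2}\big)|j^{(1)}_{\kappa,\Delta}\rangle=|j^{(2)}_{\gamma,\delta}\rangle=|j^{(3)}_\beta\rangle.$$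
   Context: Units $\hbar=1$. $\hat q,\hat p$ are the canonical position and momentum operators of a single bosonic mode, $[\hat q,\hat p]=i$; $|q\rangle_{\hat q}$ are generalized position eigenstates with ${}_{\hat q}\langle q|q'\rangle_{\hat q}=\delta(q-q')$. $\hat a=(\hat q+i\hat p)/\sqrt2$, $\hat n=\hat a^\dagger\hat a$, $|0\rangle_f$ is the vacuum with ${}_{\hat q}\langle q|0\rangle_f=\pi^{-1/4}e^{-q^2/2}$. $\hat X(r)=e^{-ir\hat p}$, $\hat Z(r)=e^{ir\hat q}$, $\hat V(\mathbf r)=e^{-ir_pr_q/2}\hat Z(r_p)\hat X(r_q)$ for $\mathbf r=(r_p,r_q)$. Squeezing operator $\hat S(\xi)=\exp(i\xi(\hat q\hat p+\hat p\hat q)/2)$ ($\xi\in\mathbb R$), which satisfies $\hat S^\dagger(\xi)\hat q\hat S(\xi)=e^{-\xi}\hat q$, $\hat S^\dagger(\xi)\hat p\hat S(\xi)=e^{\xi}\hat p$. With $\alpha_d=\sqrt{2\pi/d}$: ideal GKP state $|j^{(\mathrm{ideal})}\rangle=\sqrt{\alpha_d d}\sum_{s\in\mathbb Z}|\alpha_d(ds+j)\rangle_{\hat q}$ (non-normalizable). Approximate GKP states: $|j^{(1)}_{\kappa,\Delta}\rangle=(N^{(1)}_{\kappa,\Delta,j})^{-1/2}\sum_{s\in\mathbb Z}e^{-\frac12\kappa^2\alpha_d^2(ds+j)^2}\hat X(\alpha_d(ds+j))\hat S(-\ln\Delta)|0\rangle_f$ ($\kappa,\Delta>0$); $|j^{(2)}_{\gamma,\delta}\rangle=(N^{(2)}_{\gamma,\delta,j})^{-1/2}\iint\frac{dr_1dr_2}{2\pi\gamma\delta}e^{-\frac{r_1^2}{2\gamma^2}-\frac{r_2^2}{2\delta^2}}\hat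 V((r_1,r_2))|j^{(\mathrm{ideal})}\rangle$ ($0<\gamma\delta<2$); $|j^{(3)}_\beta\rangle=(N^{(3)}_{\beta,j})^{-1/2}e^{-\beta(\hat n+1/2)}|j^{(\mathrm{ideal})}\rangle$ ($\beta>0$); where each $N^{(\cdot)}>0$ is the constant making the state unit-norm. *)

From Stdlib Require Import Reals.
From Coquelicot Require Import Coquelicot.
Open Scope R_scope.

(* Wavefunctions in the position representation: psi(q) = <q|psi>. *)
Definition wf := R -> Complex.C.

Definition cis (t : R) : Complex.C := (cos t, sin t).
Definition Cabs2 (z : Complex.C) : R := (Re z)^2 + (Im z)^2.

Definition CSeries (a : nat -> Complex.C) : Complex.C :=
  (Series (fun n => Re (a n)), Series (fun n => Im (a n))).
Definition ZSeries_R (a : Z -> R) : R :=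
  Series (fun n => a (Z.of_nat n)) + Series (fun n => a (- Z.of_nat (S n))%Z).
Definition ZSeries (a : Z -> Complex.C) : Complex.C :=
  (ZSeries_R (fun s => Re (a s)), ZSeries_R (fun s => Im (a s))).

Definition RInt_R (f : R -> R) : R :=
  RInt_gen f (Rbar_locally m_infty) (Rbar_locally p_infty).
Definition CInt_R (f : R -> Complex.C) : Complex.C :=
  (RInt_R (fun x => Re (f x)), RInt_R (fun x => Im (f x))).

Definition norm2 (psi : wf) : R := RInt_R (fun x => Cabs2 (psi x)).
Definition normalize (psi : wf) : wf :=
  fun x => Cmult (RtoC (/ sqrt (norm2 psi))) (psi x).

(* X(r) = e^{-i r p}:  (X(r) psi)(q) = psi(q - r) *)
Definition Xop (r : R) (psi : wf) : wf := fun q => psi (q - r).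
(* S(xi) = exp(i xi (qp+pq)/2), with S^dag q S = e^{-xi} q:
   (S(xi) psi)(q) = e^{xi/2} psi(e^{xi} q) *)
Definition Sop (xi : R) (psi : wf) : wf :=
  fun q => Cmult (RtoC (exp (xi / 2))) (psi (exp xi * q)).
Definition vac : wf := fun q => RtoC (/ Rpower PI (1/4) * exp (- q ^ 2 / 2)).

Definition alpha (d : nat) : R := sqrt (2 * PI / INR d).
Definition qpt (d j : nat) (s : Z) : R := alpha d * (INR d * IZR s + INR j).

(* Ideal GKP state sqrt(alpha_d d) sum_s |q_s> is non-normalizable; an
   operator A defined on position eigenstates |y> (as the wavefunction
   A_y := A|y>) is applied to it by linearity:
   A|j^ideal> = sqrt(alpha_d d) sum_s A|q_s>. *)
Definition apply_ideal (d j : nat) (A : R -> wf) : wf :=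
  fun x => Cmult (RtoC (sqrt (alpha d * INR d))) (ZSeries (fun s => A (qpt d j s) x)).

Definition gkp1_un (d j : nat) (kappa Delta : R) : wf :=
  fun x => ZSeries (fun s =>
    Cmult (RtoC (exp (- / 2 * kappa ^ 2 * (qpt d j s) ^ 2)))
          (Xop (qpt d j s) (Sop (- ln Delta) vac) x)).
Definition gkp1 d j kappa Delta : wf := normalize (gkp1_un d j kappa Delta).

(* Gaussian average of displacements applied to a position eigenstate:
   (iint dr1 dr2 G(r1,r2) V((r1,r2)) |y>)(x), where
   V((rp,rq))|y> = e^{-i rp rq/2} e^{i rp (y+rq)} |y+rq>; the r2(=rq)
   integral against the delta function sets rq = x - y. *)
Definition Vavg (G : R -> R -> R) (y : R) : wf :=
  fun x => CInt_R (fun r1 =>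
    Cmult (RtoC (G r1 (x - y)))
          (Cmult (cis (- r1 * (x - y) / 2)) (cis (r1 * x)))).
Definition gauss2 (gamma delta : R) (r1 r2 : R) : R :=
  / (2 * PI * gamma * delta) * exp (- r1 ^ 2 / (2 * gamma ^ 2) - r2 ^ 2 / (2 * delta ^ 2)).
Definition gkp2 d j gamma delta : wf :=
  normalize (apply_ideal d j (Vavg (gauss2 gamma delta))).

(* Hermite functions <q|n>, n = a^dag a eigenbasis *)
Fixpoint hermite (n : nat) (x : R) : R :=
  match n with
  | O => 1
  | S m => match m with
           | O => 2 * x
           | S k => 2 * x * hermite m x - 2 * INR m * hermite k x
           end
  end.
Definition hermite_fn (n : nat) (x : R) : R :=
  / sqrt (2 ^ n * INR (Factorial.fact n) * sqrt PI) * hermite n x * exp (- x ^ 2 / 2).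
(* e^{-beta (n + 1/2)} |y>  =  sum_n e^{-beta(n+1/2)} <n|y> |n> *)
Definition expN (beta : R) (y : R) : wf :=
  fun x => RtoC (Series (fun n => exp (- beta * (INR n + / 2)) * hermite_fn n y * hermite_fn n x)).
Definition gkp3 d j beta : wf := normalize (apply_ideal d j (expN beta)).

Definition lam (gamma delta : R) : R := 1 + gamma ^ 2 * delta ^ 2 / 4.

From Stdlib Require Import Reals Lra Lia Classical FunctionalExtensionality.
From Coquelicot Require Import Coquelicot.
Open Scope R_scope.

(** Under the constraints all three wavefunctions are positive multiples of one real profile
    [F x = sum_s exp (- coth b / 2 * (x^2 + q_s^2) + x q_s / sinh b)], [q_s = qpt d j s], the
    first one evaluated at [x / cosh b]. Normalisation removes the constants, and the squeezing
    [S (ln (cosh b))] undoes the dilation because the dilation rescales the norm integral by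
    exactly [cosh b].
    For the third state the profile comes from Mehler's formula
    [sum_n w^n H_n(x) H_n(y) / (2^n n!) = (1 - w^2)^(-1/2) exp ((2xyw - (x^2+y^2) w^2) / (1 - w^2))]
    at [w = e^(-b)]: a Young-inequality estimate on the Hermite recurrence makes the power series
    converge for [|w| < 1], it solves the first-order linear ODE satisfied by the right-hand side,
    and so has constant ratio to it. For the second state it comes from the Gaussian Fourier
    transform [int e^(-a r^2) cos (k r) dr = J0 e^(-k^2/(4a))]: the [k]-derivative of
    [e^(k^2/(4a)) int_0^M e^(-a r^2) cos (k r) dr] is only a boundary term, which vanishes as
    [M -> ±oo]; the value of [J0 > 0] is never needed. *)

(** * Improper integrals over the real line *)

Local Notation at_minfty := (Rbar_locally m_infty).
Local Notation at_pinfty := (Rbar_locally p_infty).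

Lemma iota_R_empty (P : R -> Prop) : (forall x, ~ P x) -> @iota R_CompleteSpace P = 0.
Proof.
  intros HP. unfold iota, lim; simpl. unfold R_complete_lim.
  match goal with |- real (Lub_Rbar ?E) = 0 => assert (Hlub : Lub_Rbar E = p_infty) end.
  { apply is_lub_Rbar_unique. split.
    - intros x _; simpl; auto.
    - intros [b| |] Hb; simpl; auto.
      + assert (b + 1 <= b) by (apply (Hb (b + 1)); intros y Py; destruct (HP y Py)). lra.
      + apply (Hb 0). intros y Py. destruct (HP y Py). }
  now rewrite Hlub.
Qed.

Lemma is_RInt_gen_R_ext (f g : R -> R) (l : R) :
  (forall x, f x = g x) -> is_RInt_gen f at_minfty at_pinfty l ->
  is_RInt_gen g at_minfty at_pinfty l.
Proof.
  intros E. replace g with f by (apply functional_extensionality; exact E). easy.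
Qed.

(** When neither improper integral exists both sides are the junk value [0]. *)
Lemma RInt_R_proportional (f g : R -> R) (c : R) : c <> 0 ->
  (forall l, is_RInt_gen f at_minfty at_pinfty l -> is_RInt_gen g at_minfty at_pinfty (c * l)) ->
  (forall l, is_RInt_gen g at_minfty at_pinfty l -> is_RInt_gen f at_minfty at_pinfty (l / c)) ->
  RInt_R g = c * RInt_R f.
Proof.
  intros Hc Hfg Hgf. unfold RInt_R.
  destruct (classic (exists l, is_RInt_gen f at_minfty at_pinfty l)) as [[l Hl]|Hnone].
  - rewrite (is_RInt_gen_unique f l Hl). apply is_RInt_gen_unique. auto.
  - assert (Ef : RInt_gen f at_minfty at_pinfty = 0)
      by (apply iota_R_empty; intros l Hl; apply Hnone; eauto).
    assert (Eg : RInt_gen g at_minfty at_pinfty = 0)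
      by (apply iota_R_empty; intros l Hl; apply Hnone; eauto).
    rewrite Ef, Eg. ring.
Qed.

Lemma RInt_R_scal (f : R -> R) (k : R) : k <> 0 ->
  RInt_R (fun x => k * f x) = k * RInt_R f.
Proof.
  intros Hk. apply RInt_R_proportional; auto; intros l Hl.
  - exact (is_RInt_gen_scal f k l Hl).
  - apply (is_RInt_gen_R_ext (fun x => / k * (k * f x))).
    + intros x. now field.
    + replace (l / k) with (/ k * l) by (unfold Rdiv; ring).
      exact (is_RInt_gen_scal _ (/ k) l Hl).
Qed.

Lemma is_RInt_gen_dilate (f : R -> R) (c l : R) : 0 < c ->
  is_RInt_gen f at_minfty at_pinfty l ->
  is_RInt_gen (fun z => f (z / c)) at_minfty at_pinfty (c * l).
Proof.
  intros Hc Hf P [eps Heps].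
  assert (Hlim : locally l (fun y => P (c * y))).
  { assert (He : 0 < eps / c) by (apply Rdiv_lt_0_compat; [apply cond_pos|lra]).
    exists (mkposreal _ He). intros y Hy. apply Heps.
    change (Rabs (c * y - c * l) < eps). change (Rabs (y - l) < eps / c) in Hy.
    replace (c * y - c * l) with (c * (y - l)) by ring.
    rewrite Rabs_mult, Rabs_pos_eq by lra.
    apply (Rmult_lt_compat_l c) in Hy; [|lra].
    replace (c * (eps / c)) with (pos eps) in Hy by (field; lra). lra. }
  destruct (Hf _ Hlim) as [Qa Qb [Ma HQa] [Mb HQb] HQ].
  apply Filter_prod with (fun x => Qa (x / c)) (fun x => Qb (x / c)).
  - exists (c * Ma). intros x Hx. apply HQa.
    apply (Rmult_lt_reg_l c); [lra|]. replace (c * (x / c)) with x by (field; lra). lra.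
  - exists (c * Mb). intros x Hx. apply HQb.
    apply (Rmult_lt_reg_l c); [lra|]. replace (c * (x / c)) with x by (field; lra). lra.
  - intros a b Ha Hb. destruct (HQ _ _ Ha Hb) as [y [Hy Py]].
    exists (c * y). split; auto.
    assert (Hlin := is_RInt_comp_lin f (/ c) 0 a b y).
    replace (/ c * a + 0) with (a / c) in Hlin by (unfold Rdiv; ring).
    replace (/ c * b + 0) with (b / c) in Hlin by (unfold Rdiv; ring).
    apply (is_RInt_scal _ _ _ c) in Hlin; [|exact Hy].
    eapply is_RInt_ext; [|exact Hlin].
    intros x _. change (c * (/ c * f (/ c * x + 0)) = f (x / c)).
    replace (/ c * x + 0) with (x / c) by (unfold Rdiv; ring). field. lra.
Qed.

Lemma RInt_R_dilate (f : R -> R) (c : R) : 0 < c ->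
  RInt_R (fun z => f (z / c)) = c * RInt_R f.
Proof.
  intros Hc. apply RInt_R_proportional; [lra| |]; intros l Hl.
  - now apply is_RInt_gen_dilate.
  - apply (is_RInt_gen_R_ext (fun z => f (z / / c / c))).
    + intros z. f_equal. field. lra.
    + replace (l / c) with (/ c * l) by (unfold Rdiv; ring).
      apply (is_RInt_gen_dilate (fun u => f (u / c))); [apply Rinv_0_lt_compat; lra | exact Hl].
Qed.

Lemma continuous_of_ex_derive (f : R -> R) (x : R) : ex_derive f x -> continuous f x.
Proof. exact (@ex_derive_continuous R_AbsRing R_NormedModule f x). Qed.

Lemma is_derive_eq (f : R -> R) (x l l' : R) : is_derive f x l -> l = l' -> is_derive f x l'.
Proof. now intros H ->. Qed.

Ltac fold_square :=
  repeat match goal with |- context [?x * (?x * 1)] => replace (x * (x * 1)) with (x ^ 2) by ring end.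

Lemma ex_RInt_of_continuous (f : R -> R) :
  (forall x, continuous f x) -> forall u v, ex_RInt f u v.
Proof. intros Hf u v. apply (@ex_RInt_continuous R_CompleteNormedModule). auto. Qed.

Lemma exp_le_exp_of_le (x y : R) : x <= y -> exp x <= exp y.
Proof. intros [Hlt | ->]; [left; now apply exp_increasing | lra]. Qed.

Lemma RInt_exp_lin (a u v : R) : a <> 0 ->
  RInt (fun t => exp (- a * t)) u v = (exp (- a * u) - exp (- a * v)) / a.
Proof.
  intros Ha. apply is_RInt_unique.
  replace ((exp (- a * u) - exp (- a * v)) / a)
    with (minus (- exp (- a * v) / a) (- exp (- a * u) / a))
    by (unfold minus, plus, opp; simpl; field; exact Ha).
  apply (is_RInt_derive (fun t => - exp (- a * t) / a)).
  - intros x _. auto_derive; auto. field. exact Ha.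
  - intros x _. apply continuous_of_ex_derive. auto_derive. auto.
Qed.

Lemma exp_neg_div_lt (a u eps : R) : 0 < a -> 0 < eps -> / (a * a * eps) < u ->
  exp (- a * u) / a < eps.
Proof.
  intros Ha Heps Hu.
  assert (Hpos : 0 < a * a * eps) by (apply Rmult_lt_0_compat; nra).
  assert (Hau : 1 < a * a * eps * u).
  { apply (Rmult_lt_compat_l (a * a * eps)) in Hu; [|lra]. now rewrite Rinv_r in Hu by lra. }
  assert (Hexp := exp_ineq1_le (a * u)).
  assert (Einv : exp (- a * u) = / exp (a * u)) by (rewrite <- exp_Ropp; f_equal; ring).
  rewrite Einv. assert (0 < exp (a * u)) by apply exp_pos.
  apply (Rmult_lt_reg_r (exp (a * u) * a)); [nra|].
  field_simplify; nra.
Qed.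

Section GaussDominated.

Variables (a : R) (h : R -> R).
Hypothesis a_pos : 0 < a.
Hypothesis h_cont : forall x, continuous h x.
Hypothesis h_dom : forall x, Rabs (h x) <= exp (- a * x ^ 2).

Lemma RInt_gauss_dominated_tail_le (u v : R) : 1 <= u <= v ->
  Rabs (RInt h u v) <= exp (- a * u) / a.
Proof.
  intros Huv.
  eapply Rle_trans; [apply abs_RInt_le; [lra | now apply ex_RInt_of_continuous] |].
  eapply Rle_trans; [apply (RInt_le _ (fun t => exp (- a * t))); [lra | | |] |].
  - apply ex_RInt_of_continuous. intros x.
    apply (continuous_comp h Rabs); [apply h_cont | apply continuous_Rabs].
  - apply ex_RInt_of_continuous. intros x. apply continuous_of_ex_derive. auto_derive. auto.
  - intros x Hx. eapply Rle_trans; [apply h_dom |]. apply exp_le_exp_of_le.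
    assert (0 <= a * (x * (x - 1))) by (apply Rmult_le_pos; nra). nra.
  - rewrite RInt_exp_lin by lra.
    assert (0 < exp (- a * v)) by apply exp_pos.
    apply Rmult_le_compat_r; [left; apply Rinv_0_lt_compat|]; lra.
Qed.

Lemma RInt_gauss_dominated_cvg_pinfty :
  exists L, filterlim (fun M => RInt h 0 M) at_pinfty (locally L).
Proof.
  apply (filterlim_locally_cauchy (F := at_pinfty)). intros eps.
  set (M0 := Rmax 1 (/ (a * a * eps))).
  assert (Hsmall : forall u v, M0 < u -> u <= v -> Rabs (RInt h 0 v - RInt h 0 u) < eps).
  { intros u v Hu Huv.
    assert (H1 := Rmax_l 1 (/ (a * a * eps))). assert (H2 := Rmax_r 1 (/ (a * a * eps))).
    assert (Chasles : RInt h 0 v - RInt h 0 u = RInt h u v).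
    { rewrite <- (RInt_Chasles h 0 u v) by now apply ex_RInt_of_continuous.
      unfold plus; simpl. ring. }
    rewrite Chasles.
    eapply Rle_lt_trans; [apply RInt_gauss_dominated_tail_le; unfold M0 in *; lra|].
    apply exp_neg_div_lt; [exact a_pos | apply cond_pos | unfold M0 in *; lra]. }
  exists (fun M => M0 < M). split; [now exists M0|].
  intros u v Hu Hv. change (Rabs (RInt h 0 v - RInt h 0 u) < eps).
  destruct (Rle_dec u v) as [Huv|Huv].
  - now apply Hsmall.
  - rewrite Rabs_minus_sym. apply Hsmall; lra.
Qed.

End GaussDominated.

Lemma RInt_reflect (h : R -> R) (M : R) : ex_RInt h 0 M ->
  RInt (fun y => h (- y)) 0 (- M) = - RInt h 0 M.
Proof.
  intros Hex.
  assert (Hrefl : is_RInt (fun y => opp (h (- y))) 0 (- M) (RInt h 0 M)).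
  { apply (is_RInt_comp_opp h). rewrite Ropp_0, Ropp_involutive.
    exact (RInt_correct (V := R_CompleteNormedModule) _ _ _ Hex). }
  apply is_RInt_unique. eapply is_RInt_ext; [|exact (is_RInt_opp _ _ _ _ Hrefl)].
  intros x _. change (- - h (- x) = h (- x)). ring.
Qed.

Lemma RInt_gauss_dominated_cvg_minfty (a : R) (h : R -> R) : 0 < a ->
  (forall x, continuous h x) -> (forall x, Rabs (h x) <= exp (- a * x ^ 2)) ->
  exists L, filterlim (fun M => RInt h 0 M) at_minfty (locally L).
Proof.
  intros Ha Hc Hdom.
  destruct (RInt_gauss_dominated_cvg_pinfty a (fun y => h (- y)) Ha) as [L HL].
  - intros x. apply (continuous_comp Ropp h); [|apply Hc].
    apply continuous_of_ex_derive. auto_derive. auto.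
  - intros x. replace (x ^ 2) with ((- x) ^ 2) by ring. apply Hdom.
  - exists (- L).
    apply (filterlim_ext (fun M => opp (RInt (fun y => h (- y)) 0 (- M)))).
    + intros M. rewrite (RInt_reflect h M) by now apply ex_RInt_of_continuous.
      change (- - RInt h 0 M = RInt h 0 M). ring.
    + apply (filterlim_comp _ _ _ (fun M => RInt (fun y => h (- y)) 0 (- M)) opp _ (locally L)).
      * apply (filterlim_comp _ _ _ Ropp (fun M => RInt (fun y => h (- y)) 0 M) _ at_pinfty).
        -- apply (filterlim_Rbar_opp m_infty).
        -- exact HL.
      * exact (@filterlim_opp R_AbsRing R_NormedModule L).
Qed.

Lemma is_RInt_gen_of_RInt_0_cvg (h : R -> R) (Lp Lm : R) :
  (forall x, continuous h x) ->
  filterlim (fun M => RInt h 0 M) at_pinfty (locally Lp) ->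
  filterlim (fun M => RInt h 0 M) at_minfty (locally Lm) ->
  is_RInt_gen h at_minfty at_pinfty (Lp - Lm).
Proof.
  intros Hc HLp HLm.
  assert (Hder : forall x, is_derive (fun M => RInt h 0 M) x (h x)).
  { intros x. apply (is_derive_RInt h _ 0 x); [|apply Hc].
    apply filter_forall. intros b.
    exact (RInt_correct (V := R_CompleteNormedModule) _ _ _ (ex_RInt_of_continuous h Hc 0 b)). }
  apply (is_RInt_gen_ext (Derive (fun M => RInt h 0 M))).
  - apply filter_forall. intros _ x _. now apply is_derive_unique.
  - apply is_RInt_gen_Derive; auto; apply filter_forall; intros _ x _.
    + eexists. apply Hder.
    + apply (continuous_ext h); [|apply Hc]. intros y. symmetry. now apply is_derive_unique.
Qed.

Lemma is_RInt_gen_gauss_dominated (a : R) (h : R -> R) : 0 < a ->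
  (forall x, continuous h x) -> (forall x, Rabs (h x) <= exp (- a * x ^ 2)) ->
  exists Lp Lm, filterlim (fun M => RInt h 0 M) at_pinfty (locally Lp) /\
    filterlim (fun M => RInt h 0 M) at_minfty (locally Lm) /\
    is_RInt_gen h at_minfty at_pinfty (Lp - Lm).
Proof.
  intros Ha Hc Hdom.
  destruct (RInt_gauss_dominated_cvg_pinfty a h Ha Hc Hdom) as [Lp HLp].
  destruct (RInt_gauss_dominated_cvg_minfty a h Ha Hc Hdom) as [Lm HLm].
  exists Lp, Lm. repeat split; auto. now apply is_RInt_gen_of_RInt_0_cvg.
Qed.

(** * The Gaussian Fourier transform *)

Definition gauss_cos (a k r : R) : R := exp (- a * r ^ 2) * cos (k * r).
Definition gauss_sin (a k r : R) : R := exp (- a * r ^ 2) * sin (k * r).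

Lemma gauss_cos_continuous (a k x : R) : continuous (gauss_cos a k) x.
Proof. apply continuous_of_ex_derive. unfold gauss_cos. auto_derive. auto. Qed.

Lemma gauss_sin_continuous (a k x : R) : continuous (gauss_sin a k) x.
Proof. apply continuous_of_ex_derive. unfold gauss_sin. auto_derive. auto. Qed.

Lemma Rabs_exp_mul_le (t s : R) : Rabs s <= 1 -> Rabs (exp t * s) <= exp t.
Proof.
  intros Hs. rewrite Rabs_mult, Rabs_pos_eq by (left; apply exp_pos).
  assert (0 < exp t) by apply exp_pos. nra.
Qed.

Lemma gauss_cos_dominated (a k x : R) : Rabs (gauss_cos a k x) <= exp (- a * x ^ 2).
Proof. apply Rabs_exp_mul_le, Rabs_le, COS_bound. Qed.

Lemma gauss_sin_dominated (a k x : R) : Rabs (gauss_sin a k x) <= exp (- a * x ^ 2).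
Proof. apply Rabs_exp_mul_le, Rabs_le, SIN_bound. Qed.

Lemma gauss_sin_odd (a k r : R) : gauss_sin a k (- r) = - gauss_sin a k r.
Proof.
  unfold gauss_sin. replace (k * - r) with (- (k * r)) by ring.
  rewrite sin_neg. replace ((- r) ^ 2) with (r ^ 2) by ring. ring.
Qed.

Lemma Derive_gauss_cos_freq (a k r : R) :
  Derive (fun k => gauss_cos a k r) k = - (r * exp (- a * r ^ 2) * sin (k * r)).
Proof. apply is_derive_unique. unfold gauss_cos. auto_derive; auto. fold_square. ring. Qed.

Lemma continuity_2d_Derive_gauss_cos_freq (a k r : R) :
  continuity_2d_pt (fun k r => Derive (fun k => gauss_cos a k r) k) k r.
Proof.
  apply (continuity_2d_pt_ext (fun k r => - ((r * exp (- a * (r * r))) * sin (k * r)))).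
  { intros k' r'. rewrite Derive_gauss_cos_freq. now replace (r' ^ 2) with (r' * r') by ring. }
  apply continuity_2d_pt_opp, continuity_2d_pt_mult.
  - apply continuity_2d_pt_mult; [apply continuity_2d_pt_id2|].
    apply (continuity_1d_2d_pt_comp exp (fun _ r => - a * (r * r))).
    + apply derivable_continuous_pt, derivable_pt_exp.
    + apply continuity_2d_pt_mult; [apply continuity_2d_pt_const|].
      apply continuity_2d_pt_mult; apply continuity_2d_pt_id2.
  - apply (continuity_1d_2d_pt_comp sin (fun k r => k * r)); [apply continuity_sin|].
    apply continuity_2d_pt_mult; [apply continuity_2d_pt_id1 | apply continuity_2d_pt_id2].
Qed.

Definition gauss_cos_scaled (a M k : R) : R :=
  RInt (gauss_cos a k) 0 M * exp (k ^ 2 / (4 * a)).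

Section GaussFourier.

Variable a : R.
Hypothesis a_pos : 0 < a.

Lemma RInt_Derive_gauss_cos_freq (k M : R) :
  RInt (fun r => Derive (fun k => gauss_cos a k r) k) 0 M
  = exp (- a * M ^ 2) * sin (k * M) / (2 * a) - k / (2 * a) * RInt (gauss_cos a k) 0 M.
Proof.
  apply is_RInt_unique.
  set (U := fun r => exp (- a * r ^ 2) * sin (k * r) / (2 * a)).
  assert (HU : is_RInt (fun r => Derive (fun k => gauss_cos a k r) k + k / (2 * a) * gauss_cos a k r)
                 0 M (minus (U M) (U 0))).
  { apply (is_RInt_derive (V := R_CompleteNormedModule)).
    - intros r _. rewrite Derive_gauss_cos_freq. unfold U, gauss_cos.
      auto_derive; auto. fold_square. field. lra.
    - intros r _. apply continuous_of_ex_derive.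
      apply (ex_derive_ext (fun r => - (r * exp (- a * r ^ 2) * sin (k * r)) + k / (2 * a) * gauss_cos a k r)).
      + intros t. now rewrite Derive_gauss_cos_freq.
      + unfold gauss_cos. auto_derive. auto. }
  assert (Hcos := RInt_correct (V := R_CompleteNormedModule) _ _ _
                    (ex_RInt_of_continuous _ (gauss_cos_continuous a k) 0 M)).
  assert (Hdiff := is_RInt_minus (V := R_CompleteNormedModule) _ _ _ _ _ _ HU
                  (is_RInt_scal (V := R_CompleteNormedModule) _ _ _ (k / (2 * a)) _ Hcos)).
  eapply is_RInt_ext; [|replace (_ - _) with (minus (minus (U M) (U 0))
                          (scal (k / (2 * a)) (RInt (gauss_cos a k) 0 M))); [exact Hdiff|]].
  - intros r _. unfold minus, plus, opp, scal; simpl. unfold mult; simpl. ring.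
  - unfold U, minus, plus, opp, scal; simpl. unfold mult; simpl.
    rewrite Rmult_0_r, sin_0. field. lra.
Qed.

Lemma is_derive_RInt_gauss_cos_freq (M k : R) :
  is_derive (fun k => RInt (gauss_cos a k) 0 M) k
    (exp (- a * M ^ 2) * sin (k * M) / (2 * a) - k / (2 * a) * RInt (gauss_cos a k) 0 M).
Proof.
  rewrite <- RInt_Derive_gauss_cos_freq.
  apply (is_derive_RInt_param (fun k r => gauss_cos a k r)).
  - apply filter_forall. intros k' r _. unfold gauss_cos. auto_derive. auto.
  - intros r _. apply continuity_2d_Derive_gauss_cos_freq.
  - apply filter_forall. intros k'. apply ex_RInt_of_continuous, gauss_cos_continuous.
Qed.

Lemma is_derive_gauss_cos_scaled (M k : R) :
  is_derive (gauss_cos_scaled a M) k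
    (exp (k ^ 2 / (4 * a)) * (exp (- a * M ^ 2) * sin (k * M) / (2 * a))).
Proof.
  assert (Hexp : is_derive (fun k => exp (k ^ 2 / (4 * a))) k
                   (2 * k / (4 * a) * exp (k ^ 2 / (4 * a)))).
  { auto_derive; auto. fold_square. unfold Rdiv. field. lra. }
  eapply is_derive_eq; [exact (is_derive_mult _ _ _ _ _ (is_derive_RInt_gauss_cos_freq M k) Hexp
                                 (fun n m => Rmult_comm n m))|].
  unfold plus, mult; simpl. field. lra.
Qed.

Lemma gauss_cos_scaled_deriv_le (M k c : R) : c ^ 2 <= k ^ 2 ->
  Rabs (exp (c ^ 2 / (4 * a)) * (exp (- a * M ^ 2) * sin (c * M) / (2 * a)))
  <= exp (k ^ 2 / (4 * a)) * exp (- a * M ^ 2) / (2 * a).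
Proof.
  intros Hck.
  assert (Hmono : exp (c ^ 2 / (4 * a)) <= exp (k ^ 2 / (4 * a))).
  { apply exp_le_exp_of_le. unfold Rdiv.
    apply Rmult_le_compat_r; [left; apply Rinv_0_lt_compat|]; lra. }
  assert (Hsin : Rabs (exp (- a * M ^ 2) * sin (c * M)) <= exp (- a * M ^ 2))
    by apply Rabs_exp_mul_le, Rabs_le, SIN_bound.
  assert (0 < / (2 * a)) by (apply Rinv_0_lt_compat; lra).
  assert (0 <= Rabs (exp (- a * M ^ 2) * sin (c * M))) by apply Rabs_pos.
  unfold Rdiv. rewrite Rabs_mult, Rabs_mult, (Rabs_pos_eq (exp _)), (Rabs_pos_eq (/ _))
    by (left; (apply exp_pos || lra)).
  rewrite Rmult_assoc. apply Rmult_le_compat; try (left; apply exp_pos); try nra.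
Qed.

Lemma gauss_cos_scaled_sub_le (M k : R) :
  Rabs (gauss_cos_scaled a M k - RInt (gauss_cos a 0) 0 M)
    <= Rabs k * (exp (k ^ 2 / (4 * a)) * exp (- a * M ^ 2) / (2 * a)).
Proof.
  destruct (MVT_gen (gauss_cos_scaled a M) 0 k
     (fun c => exp (c ^ 2 / (4 * a)) * (exp (- a * M ^ 2) * sin (c * M) / (2 * a))))
    as [c [Hc E]].
  - intros x _. apply is_derive_gauss_cos_scaled.
  - intros x _. apply (proj2 (continuity_pt_filterlim _ _)), continuous_of_ex_derive.
    eexists. apply is_derive_gauss_cos_scaled.
  - unfold gauss_cos_scaled at 2 in E.
    replace (0 ^ 2 / (4 * a)) with 0 in E by (unfold Rdiv; ring).
    rewrite exp_0, Rmult_1_r in E. rewrite E, Rminus_0_r, Rabs_mult, (Rmult_comm (Rabs k)).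
    apply Rmult_le_compat_r; [apply Rabs_pos|].
    apply gauss_cos_scaled_deriv_le.
    unfold Rmin, Rmax in Hc. destruct (Rle_dec 0 k); nra.
Qed.

Lemma gauss_tail_small (C : R) : 0 <= C -> forall eps, 0 < eps ->
  exists N, forall M, N < Rabs M -> C * exp (- a * M ^ 2) < eps.
Proof.
  intros HC eps Heps. exists (C / (a * eps) + 1). intros M HM.
  assert (0 <= C / (a * eps)) by (apply Rmult_le_pos; [lra | left; apply Rinv_0_lt_compat; nra]).
  assert (HM2 : Rabs M <= M ^ 2).
  { replace (M ^ 2) with (Rabs M * Rabs M) by (rewrite <- Rabs_mult, Rabs_pos_eq; nra). nra. }
  assert (Hexp := exp_ineq1_le (a * M ^ 2)).
  assert (Einv : exp (- a * M ^ 2) = / exp (a * M ^ 2)) by (rewrite <- exp_Ropp; f_equal; ring).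
  assert (0 < exp (a * M ^ 2)) by apply exp_pos.
  assert (HCM : C < a * eps * M ^ 2).
  { assert (Hq : C / (a * eps) < M ^ 2) by lra.
    apply (Rmult_lt_compat_l (a * eps)) in Hq; [|nra].
    now replace (a * eps * (C / (a * eps))) with C in Hq by (field; lra). }
  rewrite Einv. apply (Rmult_lt_reg_r (exp (a * M ^ 2))); [lra|].
  rewrite Rmult_assoc, Rinv_l by lra. nra.
Qed.

Lemma lim_gauss_cos_scaled (k Lk L0 : R) (s : Rbar) : s = p_infty \/ s = m_infty ->
  is_lim (fun M => RInt (gauss_cos a k) 0 M) s Lk ->
  is_lim (fun M => RInt (gauss_cos a 0) 0 M) s L0 ->
  Lk * exp (k ^ 2 / (4 * a)) = L0.
Proof.
  intros Hs Hk H0.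
  set (D := fun M => gauss_cos_scaled a M k - RInt (gauss_cos a 0) 0 M).
  assert (HDlim : is_lim D s (Lk * exp (k ^ 2 / (4 * a)) - L0)).
  { apply is_lim_minus'; auto. now apply (is_lim_scal_r _ _ _ Lk). }
  assert (HD0 : is_lim D s 0).
  { set (C := Rabs k * exp (k ^ 2 / (4 * a)) / (2 * a)).
    assert (HC : 0 <= C).
    { apply Rmult_le_pos; [apply Rmult_le_pos; [apply Rabs_pos | left; apply exp_pos]|].
      left; apply Rinv_0_lt_compat; lra. }
    intros P [eps HP].
    destruct (gauss_tail_small C HC eps (cond_pos eps)) as [N HN].
    assert (Hfar : forall M, N < Rabs M -> P (D M)).
    { intros M HM. apply HP. change (Rabs (D M - 0) < eps). rewrite Rminus_0_r.
      eapply Rle_lt_trans; [apply gauss_cos_scaled_sub_le|].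
      replace (Rabs k * (exp (k ^ 2 / (4 * a)) * exp (- a * M ^ 2) / (2 * a)))
        with (C * exp (- a * M ^ 2)) by (unfold C; field; lra). auto. }
    assert (N <= Rabs N) by apply Rle_abs. assert (0 <= Rabs N) by apply Rabs_pos.
    destruct Hs as [-> | ->].
    - exists (Rabs N). intros x Hx. apply Hfar. rewrite Rabs_pos_eq; lra.
    - exists (- Rabs N). intros x Hx. apply Hfar. rewrite Rabs_left; lra. }
  apply is_lim_unique in HDlim. apply is_lim_unique in HD0. rewrite HDlim in HD0.
  apply Rminus_diag_uniq. now apply Rbar_finite_eq in HD0.
Qed.

Lemma RInt_gauss_cos_0_nonneg (u v : R) : u <= v -> 0 <= RInt (gauss_cos a 0) u v.
Proof.
  intros Huv. apply RInt_ge_0; [exact Huv | apply ex_RInt_of_continuous, gauss_cos_continuous|].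
  intros x _. unfold gauss_cos. rewrite Rmult_0_l, cos_0, Rmult_1_r. left; apply exp_pos.
Qed.

Lemma RInt_gauss_cos_0_01_pos : 0 < RInt (gauss_cos a 0) 0 1.
Proof.
  apply Rlt_le_trans with (exp (- a)); [apply exp_pos|].
  replace (exp (- a)) with (RInt (fun _ => exp (- a)) 0 1)
    by (rewrite RInt_const; change ((1 - 0) * exp (- a) = exp (- a)); ring).
  apply RInt_le; [lra | apply ex_RInt_const | apply ex_RInt_of_continuous, gauss_cos_continuous|].
  intros x Hx. unfold gauss_cos. rewrite Rmult_0_l, cos_0, Rmult_1_r.
  apply exp_le_exp_of_le. assert (x ^ 2 <= 1) by nra. nra.
Qed.

Lemma is_RInt_gen_gauss_cos :
  exists J0, 0 < J0 /\
    forall k, is_RInt_gen (gauss_cos a k) at_minfty at_pinfty (J0 * exp (- k ^ 2 / (4 * a))).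
Proof.
  destruct (is_RInt_gen_gauss_dominated a (gauss_cos a 0) a_pos (gauss_cos_continuous a 0)
              (gauss_cos_dominated a 0)) as [P0 [M0 [HP0 [HM0 _]]]].
  exists (P0 - M0). split.
  - assert (HP : Rbar_le (RInt (gauss_cos a 0) 0 1) P0).
    { apply (filterlim_le (F := at_pinfty) (fun _ => RInt (gauss_cos a 0) 0 1)
               (fun M => RInt (gauss_cos a 0) 0 M)); [|apply filterlim_const | exact HP0].
      exists 1. intros x Hx.
      rewrite <- (RInt_Chasles (V := R_CompleteNormedModule) (gauss_cos a 0) 0 1 x)
        by apply ex_RInt_of_continuous, gauss_cos_continuous.
      assert (0 <= RInt (gauss_cos a 0) 1 x) by (apply RInt_gauss_cos_0_nonneg; lra).
      unfold plus; simpl. lra. }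
    assert (HM : Rbar_le M0 0).
    { apply (filterlim_le (F := at_minfty) (fun M => RInt (gauss_cos a 0) 0 M) (fun _ => 0));
        [|exact HM0 | apply filterlim_const].
      exists 0. intros x Hx.
      rewrite <- (opp_RInt_swap (V := R_CompleteNormedModule))
        by apply ex_RInt_of_continuous, gauss_cos_continuous.
      assert (0 <= RInt (gauss_cos a 0) x 0) by (apply RInt_gauss_cos_0_nonneg; lra).
      change (- RInt (gauss_cos a 0) x 0 <= 0). lra. }
    simpl in HP, HM. assert (H01 := RInt_gauss_cos_0_01_pos). lra.
  - intros k.
    destruct (is_RInt_gen_gauss_dominated a (gauss_cos a k) a_pos (gauss_cos_continuous a k)
                (gauss_cos_dominated a k)) as [Pk [Mk [HPk [HMk HIk]]]].
    assert (EP := lim_gauss_cos_scaled k Pk P0 p_infty (or_introl eq_refl) HPk HP0).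
    assert (EM := lim_gauss_cos_scaled k Mk M0 m_infty (or_intror eq_refl) HMk HM0).
    replace ((P0 - M0) * exp (- k ^ 2 / (4 * a))) with (Pk - Mk); [exact HIk|].
    rewrite <- EP, <- EM.
    replace (- k ^ 2 / (4 * a)) with (- (k ^ 2 / (4 * a))) by (unfold Rdiv; ring).
    rewrite exp_Ropp. field. apply Rgt_not_eq, exp_pos.
Qed.

Lemma is_RInt_gen_gauss_sin (k : R) : is_RInt_gen (gauss_sin a k) at_minfty at_pinfty 0.
Proof.
  destruct (is_RInt_gen_gauss_dominated a (gauss_sin a k) a_pos (gauss_sin_continuous a k)
              (gauss_sin_dominated a k)) as [P [M [HP [HM HI]]]].
  assert (Heven : forall x, RInt (gauss_sin a k) 0 (- x) = RInt (gauss_sin a k) 0 x).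
  { intros x.
    assert (Hex : forall u v, ex_RInt (gauss_sin a k) u v)
      by apply ex_RInt_of_continuous, gauss_sin_continuous.
    assert (Hrefl := RInt_reflect (gauss_sin a k) (- x) (Hex 0 (- x))).
    rewrite Ropp_involutive in Hrefl.
    assert (Hodd : RInt (fun y => gauss_sin a k (- y)) 0 x = - RInt (gauss_sin a k) 0 x).
    { apply is_RInt_unique.
      eapply is_RInt_ext;
        [|exact (is_RInt_opp _ _ _ _ (RInt_correct (V := R_CompleteNormedModule) _ _ _ (Hex 0 x)))].
      intros y _. symmetry. apply gauss_sin_odd. }
    lra. }
  assert (HM' : filterlim (fun x => RInt (gauss_sin a k) 0 x) at_minfty (locally P)).
  { apply (filterlim_ext (fun x => RInt (gauss_sin a k) 0 (- x))); [exact Heven|].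
    apply (filterlim_comp _ _ _ Ropp (fun x => RInt (gauss_sin a k) 0 x) _ at_pinfty); [|exact HP].
    apply (filterlim_Rbar_opp m_infty). }
  replace 0 with (P - M); [exact HI|].
  assert (M = P) by exact (filterlim_locally_unique (F := at_minfty) _ _ _ HM HM'). lra.
Qed.

End GaussFourier.

(** * Mehler's formula *)

Lemma hermite_SS (n : nat) (x : R) :
  hermite (S (S n)) x = 2 * x * hermite (S n) x - 2 * INR (S n) * hermite n x.
Proof. reflexivity. Qed.

Lemma INR_fact_S (n : nat) : INR (Factorial.fact (S n)) = INR (S n) * INR (Factorial.fact n).
Proof. now rewrite fact_simpl, mult_INR. Qed.

Definition mehler_coef (x y : R) (n : nat) : R :=
  hermite n x * hermite n y / (2 ^ n * INR (Factorial.fact n)).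

Lemma mehler_coef_0 (x y : R) : mehler_coef x y 0 = 1.
Proof. unfold mehler_coef. simpl. field. Qed.

Lemma mehler_coef_rec (x y : R) (m : nat) :
  INR (S (S (S (S m)))) * mehler_coef x y (S (S (S (S m)))) =
  2 * x * y * mehler_coef x y (S (S (S m)))
  + (2 * INR m + 5 - 2 * (x ^ 2 + y ^ 2)) * mehler_coef x y (S (S m))
  + 2 * x * y * mehler_coef x y (S m) - INR (S m) * mehler_coef x y m.
Proof.
  unfold mehler_coef. rewrite !hermite_SS, !INR_fact_S, !S_INR.
  assert (0 < INR (Factorial.fact m)) by apply INR_fact_lt_0.
  assert (0 < 2 ^ m) by (apply pow_lt; lra).
  assert (0 <= INR m) by apply pos_INR.
  simpl pow. field. repeat split; lra.
Qed.

Lemma mehler_coef_diag_nonneg (x : R) (n : nat) : 0 <= mehler_coef x x n.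
Proof.
  unfold mehler_coef. apply Rmult_le_pos; [nra|].
  left. apply Rinv_0_lt_compat, Rmult_lt_0_compat; [apply pow_lt; lra | apply INR_fact_lt_0].
Qed.

Lemma Rabs_mehler_coef_le (x y : R) (n : nat) :
  Rabs (mehler_coef x y n) <= (mehler_coef x x n + mehler_coef y y n) / 2.
Proof.
  unfold mehler_coef.
  assert (HP : 0 < 2 ^ n * INR (Factorial.fact n))
    by (apply Rmult_lt_0_compat; [apply pow_lt; lra | apply INR_fact_lt_0]).
  set (A := hermite n x). set (B := hermite n y). set (P := 2 ^ n * INR (Factorial.fact n)) in *.
  unfold Rdiv. rewrite Rabs_mult, (Rabs_pos_eq (/ P)) by (left; apply Rinv_0_lt_compat; lra).
  assert (Hamgm : Rabs (A * B) <= (A * A + B * B) / 2).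
  { rewrite Rabs_mult. replace (A * A) with (Rabs A * Rabs A) by (rewrite <- Rabs_mult; apply Rabs_pos_eq; nra).
    replace (B * B) with (Rabs B * Rabs B) by (rewrite <- Rabs_mult; apply Rabs_pos_eq; nra).
    assert (0 <= (Rabs A - Rabs B) ^ 2) by apply pow2_ge_0. nra. }
  assert (0 < / P) by (apply Rinv_0_lt_compat; lra).
  replace ((A * A * / P + B * B * / P) * / 2) with ((A * A + B * B) / 2 * / P) by (field; lra).
  apply Rmult_le_compat_r; lra.
Qed.

(** Young's inequality [(X - Y)^2 <= (1 + 1/eps) X^2 + (1 + eps) Y^2] applied to the Hermite recurrence. *)
Lemma mehler_coef_diag_step (x eps : R) (n : nat) : 0 < eps ->
  mehler_coef x x (S (S n)) <=
  (1 + / eps) * (2 * x ^ 2 / (INR n + 2)) * mehler_coef x x (S n) + (1 + eps) * mehler_coef x x n.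
Proof.
  intros Heps.
  set (A := hermite (S n) x). set (B := hermite n x). set (N := INR n).
  set (F := INR (Factorial.fact n)). set (P := 2 ^ n).
  assert (HN : 0 <= N) by apply pos_INR.
  assert (HF : 0 < F) by apply INR_fact_lt_0. assert (HP : 0 < P) by (apply pow_lt; lra).
  set (D := 4 * P * (N + 2) * (N + 1) * F).
  assert (HD : 0 < D) by (unfold D; repeat apply Rmult_lt_0_compat; lra).
  set (X := 2 * x * A). set (Y := 2 * (N + 1) * B).
  assert (E2 : mehler_coef x x (S (S n)) = (X - Y) ^ 2 / D).
  { unfold mehler_coef. rewrite hermite_SS, !INR_fact_S, !S_INR. fold A B N F.
    change (2 ^ S (S n)) with (2 * (2 * P)). unfold X, Y, D. field. lra. }
  assert (E1 : mehler_coef x x (S n) = 2 * (N + 2) * A ^ 2 / D).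
  { unfold mehler_coef. rewrite INR_fact_S, S_INR. fold A N F.
    change (2 ^ S n) with (2 * P). unfold D. field. lra. }
  assert (E0 : mehler_coef x x n = 4 * (N + 2) * (N + 1) * B ^ 2 / D).
  { unfold mehler_coef. fold B F P. unfold D. field. lra. }
  rewrite E2, E1, E0. fold N.
  replace ((1 + / eps) * (2 * x ^ 2 / (N + 2)) * (2 * (N + 2) * A ^ 2 / D)
           + (1 + eps) * (4 * (N + 2) * (N + 1) * B ^ 2 / D))
    with (((1 + / eps) * X ^ 2 + (1 + eps) * (4 * (N + 2) * (N + 1) * B ^ 2)) / D)
    by (unfold X; field; lra).
  unfold Rdiv. apply Rmult_le_compat_r; [left; apply Rinv_0_lt_compat; lra|].
  assert (Hyoung : (X - Y) ^ 2 <= (1 + / eps) * X ^ 2 + (1 + eps) * Y ^ 2).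
  { assert (0 <= / eps * (X + eps * Y) ^ 2)
      by (apply Rmult_le_pos; [left; apply Rinv_0_lt_compat; lra | apply pow2_ge_0]).
    replace ((1 + / eps) * X ^ 2 + (1 + eps) * Y ^ 2)
      with ((X - Y) ^ 2 + / eps * (X + eps * Y) ^ 2) by (field; lra). lra. }
  assert (HY : Y ^ 2 <= 4 * (N + 2) * (N + 1) * B ^ 2).
  { unfold Y. assert (0 <= B ^ 2) by apply pow2_ge_0. nra. }
  assert (0 < 1 + eps) by lra. nra.
Qed.

Lemma finite_geom_bound (u : nat -> R) (lam : R) (N : nat) : 0 < lam ->
  exists K, 0 <= K /\ forall k, (k <= N)%nat -> u k <= K * lam ^ k.
Proof.
  intros Hlam. induction N as [|N [K [HK HuK]]].
  - exists (Rmax 0 (u 0%nat)). split; [apply Rmax_l|].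
    intros k Hk. replace k with 0%nat by lia. simpl. rewrite Rmult_1_r. apply Rmax_r.
  - assert (Hpow : 0 < lam ^ S N) by (apply pow_lt; lra).
    exists (Rmax K (u (S N) / lam ^ S N)). split; [eapply Rle_trans; [exact HK | apply Rmax_l]|].
    intros k Hk. destruct (Nat.eq_dec k (S N)) as [->|Hne].
    + assert (Hm := Rmax_r K (u (S N) / lam ^ S N)).
      apply (Rmult_le_compat_r (lam ^ S N)) in Hm; [|lra].
      unfold Rdiv in Hm. now rewrite Rmult_assoc, Rinv_l, Rmult_1_r in Hm by lra.
    + eapply Rle_trans; [apply HuK; lia|].
      apply Rmult_le_compat_r; [left; apply pow_lt; lra | apply Rmax_l].
Qed.

Lemma two_step_geom_bound (u : nat -> R) (A B lam : R) (N : nat) :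
  0 < lam -> 0 <= A -> 0 <= B -> A * lam + B <= lam ^ 2 ->
  (forall n, (N <= n)%nat -> u (S (S n)) <= A * u (S n) + B * u n) ->
  exists K, forall n, u n <= K * lam ^ n.
Proof.
  intros Hlam HA HB Hchar Hstep.
  destruct (finite_geom_bound u lam (S N) Hlam) as [K [HK Hbase]].
  exists K.
  assert (Hpair : forall n, u n <= K * lam ^ n /\ u (S n) <= K * lam ^ S n).
  { induction n as [|n [IH1 IH2]]; [split; apply Hbase; lia|].
    split; [exact IH2|].
    destruct (Compare_dec.le_lt_dec (S (S n)) (S N)) as [Hle|Hlt]; [now apply Hbase|].
    eapply Rle_trans; [apply Hstep; lia|].
    assert (0 <= K * lam ^ n) by (apply Rmult_le_pos; [lra | apply pow_le; lra]).
    apply Rle_trans with (A * (K * lam ^ S n) + B * (K * lam ^ n));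
      [apply Rplus_le_compat; apply Rmult_le_compat_l; lra|].
    simpl pow. nra. }
  intros n. apply Hpair.
Qed.

Lemma mehler_coef_diag_geom_bound (x lam : R) : 1 < lam ->
  exists K, forall n, mehler_coef x x n <= K * lam ^ n.
Proof.
  intros Hlam.
  set (eps := (lam - 1) / 2). assert (Heps : 0 < eps) by (unfold eps; lra).
  set (c := (1 + / eps) * (2 * x ^ 2)).
  assert (Hc : 0 <= c) by (apply Rmult_le_pos;
    [assert (0 < / eps) by (apply Rinv_0_lt_compat; lra); lra | nra]).
  destruct (INR_unbounded (c / eps)) as [N HN].
  apply (two_step_geom_bound _ eps (1 + eps) lam N); try lra.
  - unfold eps. nra.
  - intros n Hn. eapply Rle_trans; [apply (mehler_coef_diag_step x eps n Heps)|].
    apply Rplus_le_compat_r, Rmult_le_compat_r; [apply mehler_coef_diag_nonneg|].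
    assert (HnN : INR N <= INR n + 2) by (assert (INR N <= INR n) by (apply le_INR; lia);
                                          assert (0 <= INR n) by apply pos_INR; lra).
    assert (0 < INR n + 2) by (assert (0 <= INR n) by apply pos_INR; lra).
    replace ((1 + / eps) * (2 * x ^ 2 / (INR n + 2))) with (c / (INR n + 2))
      by (unfold c; field; repeat split; lra).
    apply (Rmult_le_reg_r (INR n + 2)); [lra|].
    unfold Rdiv. rewrite Rmult_assoc, Rinv_l by lra.
    assert (c < eps * INR N).
    { apply (Rmult_lt_reg_r (/ eps)); [apply Rinv_0_lt_compat; lra|].
      replace (eps * INR N * / eps) with (INR N) by (field; lra). exact HN. }
    nra.
Qed.

Lemma mehler_coef_CV_disk (x y r : R) : 0 <= r < 1 -> CV_disk (mehler_coef x y) r.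
Proof.
  intros Hr.
  set (lam := 2 / (1 + r)).
  assert (Hlam : 1 < lam).
  { unfold lam. apply (Rmult_lt_reg_r (1 + r)); [lra|].
    unfold Rdiv. rewrite Rmult_assoc, Rinv_l; lra. }
  destruct (mehler_coef_diag_geom_bound x lam Hlam) as [Kx HKx].
  destruct (mehler_coef_diag_geom_bound y lam Hlam) as [Ky HKy].
  set (q := lam * r).
  assert (Hq : 0 <= q < 1).
  { unfold q, lam. split; [apply Rmult_le_pos; [left; apply Rdiv_lt_0_compat|]; lra|].
    apply (Rmult_lt_reg_r (1 + r)); [lra|]. unfold Rdiv. field_simplify; lra. }
  apply (ex_series_le (K := R_AbsRing) (V := R_CompleteNormedModule) _
           (fun n => (Kx + Ky) / 2 * q ^ n)).
  - intros n. change (Rabs (Rabs (mehler_coef x y n * r ^ n)) <= (Kx + Ky) / 2 * q ^ n).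
    rewrite Rabs_Rabsolu, Rabs_mult, (Rabs_pos_eq (r ^ n)) by (apply pow_le; lra).
    assert (0 <= r ^ n) by (apply pow_le; lra).
    eapply Rle_trans; [apply Rmult_le_compat_r; [lra | apply Rabs_mehler_coef_le]|].
    unfold q. rewrite Rpow_mult_distr.
    specialize (HKx n). specialize (HKy n).
    replace ((Kx + Ky) / 2 * (lam ^ n * r ^ n))
      with ((Kx * lam ^ n + Ky * lam ^ n) / 2 * r ^ n) by field.
    apply Rmult_le_compat_r; lra.
  - apply (ex_series_scal_l (V := R_NormedModule)), ex_series_geom. rewrite Rabs_pos_eq; lra.
Qed.

Lemma mehler_coef_CV_radius (x y w : R) : Rabs w < 1 ->
  Rbar_lt (Rabs w) (CV_radius (mehler_coef x y)).
Proof.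
  intros Hw.
  set (r := (Rabs w + 1) / 2).
  assert (Hr : 0 <= r < 1) by (unfold r; assert (0 <= Rabs w) by apply Rabs_pos; lra).
  assert (Hle : Rbar_le r (CV_radius (mehler_coef x y)))
    by exact (proj1 (Lub_Rbar_correct (CV_disk (mehler_coef x y))) r (mehler_coef_CV_disk x y r Hr)).
  destruct (CV_radius (mehler_coef x y)) as [c| |]; simpl in *; auto.
  unfold r in Hle. lra.
Qed.

Definition mehler_ode_coef (x y w : R) : R :=
  2 * x * y + (1 - 2 * (x ^ 2 + y ^ 2)) * w + 2 * x * y * w ^ 2 - w ^ 3.

Lemma mehler_coef_ode_termwise (x y : R) (n : nat) :
  let b := mehler_coef x y in let D := PS_derive b in
  D n - 2 * PS_incr_n D 2 n + PS_incr_n D 4 n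
  - (2 * x * y * b n + (1 - 2 * (x ^ 2 + y ^ 2)) * PS_incr_n b 1 n
     + 2 * x * y * PS_incr_n b 2 n - PS_incr_n b 3 n) = 0.
Proof.
  intros b D.
  destruct n as [|[|[|[|m]]]];
    [unfold D, b, PS_derive; simpl PS_incr_n; unfold PS_incr_1, zero; simpl;
     unfold mehler_coef; simpl; field ..|].
  change (PS_incr_n D 2 (S (S (S (S m))))) with (D (S (S m))).
  change (PS_incr_n D 4 (S (S (S (S m))))) with (D m).
  change (PS_incr_n b 1 (S (S (S (S m))))) with (b (S (S (S m)))).
  change (PS_incr_n b 2 (S (S (S (S m))))) with (b (S (S m))).
  change (PS_incr_n b 3 (S (S (S (S m))))) with (b (S m)).
  unfold D, PS_derive, b. rewrite (mehler_coef_rec x y (S m)), !S_INR. ring.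
Qed.

Lemma PSeries_mehler_ode (x y w : R) : Rabs w < 1 ->
  (1 - w ^ 2) ^ 2 * PSeries (PS_derive (mehler_coef x y)) w
  = mehler_ode_coef x y w * PSeries (mehler_coef x y) w.
Proof.
  intros Hw.
  set (b := mehler_coef x y). set (D := PS_derive b).
  assert (HD := PSeries_correct D w (ex_pseries_derive b w (mehler_coef_CV_radius x y w Hw))).
  assert (Hb := PSeries_correct b w (CV_radius_inside b w (mehler_coef_CV_radius x y w Hw))).
  set (fD := PSeries D w) in *. set (fb := PSeries b w) in *.
  assert (Hc : forall c : R, mult w c = mult c w) by (intros; apply Rmult_comm).
  assert (H1 := is_pseries_scal 2 _ _ _ (Hc 2) (is_pseries_incr_n D 2 w fD HD)).
  assert (H2 := is_pseries_incr_n D 4 w fD HD).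
  assert (HL := is_pseries_plus _ _ _ _ _ (is_pseries_minus _ _ _ _ _ HD H1) H2).
  assert (H3 := is_pseries_scal (2 * x * y) _ _ _ (Hc _) Hb).
  assert (H4 := is_pseries_scal (1 - 2 * (x ^ 2 + y ^ 2)) _ _ _ (Hc _)
                  (is_pseries_incr_n b 1 w fb Hb)).
  assert (H5 := is_pseries_scal (2 * x * y) _ _ _ (Hc _) (is_pseries_incr_n b 2 w fb Hb)).
  assert (H6 := is_pseries_incr_n b 3 w fb Hb).
  assert (HR := is_pseries_minus _ _ _ _ _
                  (is_pseries_plus _ _ _ _ _ (is_pseries_plus _ _ _ _ _ H3 H4) H5) H6).
  assert (HT := is_pseries_minus _ _ _ _ _ HL HR).
  match type of HT with is_pseries _ _ ?L => assert (HZ : is_pseries (fun _ : nat => 0) w L) end.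
  { eapply is_pseries_ext; [|exact HT]. intros n.
    unfold PS_minus, PS_plus, PS_scal, PS_opp. unfold plus, opp, scal; simpl. unfold mult; simpl.
    assert (E := mehler_coef_ode_termwise x y n). simpl in E. fold b D in E. lra. }
  apply is_pseries_unique in HZ. rewrite PSeries_const_0 in HZ.
  unfold plus, opp, scal in HZ; simpl in HZ. unfold mult in HZ; simpl in HZ.
  unfold one in HZ; simpl in HZ.
  unfold mehler_ode_coef. simpl pow. lra.
Qed.

Definition mehler_exponent (x y w : R) : R :=
  (2 * x * y * w - (x ^ 2 + y ^ 2) * w ^ 2) / (1 - w ^ 2).

Definition mehler_closed_inv (x y w : R) : R :=
  sqrt (1 - w ^ 2) * exp (- mehler_exponent x y w).

Lemma one_sub_sq_pos (w : R) : Rabs w < 1 -> 0 < 1 - w ^ 2.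
Proof.
  intros Hw. replace (w ^ 2) with (Rabs w * Rabs w) by (rewrite <- Rabs_mult, Rabs_pos_eq; nra).
  assert (0 <= Rabs w) by apply Rabs_pos. nra.
Qed.

Lemma is_derive_sqrt_one_sub_sq (w : R) : Rabs w < 1 ->
  is_derive (fun w => sqrt (1 - w ^ 2)) w (- w * sqrt (1 - w ^ 2) / (1 - w ^ 2)).
Proof.
  intros Hw. assert (Hw2 := one_sub_sq_pos w Hw).
  eapply is_derive_eq; [auto_derive; [fold_square; lra | reflexivity]|].
  fold_square. replace (1 + - w ^ 2) with (1 - w ^ 2) by ring.
  assert (Hr := sqrt_lt_R0 _ Hw2). assert (Hsq := sqrt_sqrt _ (Rlt_le _ _ Hw2)).
  set (r := sqrt (1 - w ^ 2)) in *. rewrite <- Hsq. field. lra.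
Qed.

Lemma is_derive_mehler_closed_inv (x y w : R) : Rabs w < 1 ->
  is_derive (mehler_closed_inv x y) w
    (- mehler_ode_coef x y w / (1 - w ^ 2) ^ 2 * mehler_closed_inv x y w).
Proof.
  intros Hw. assert (Hw2 := one_sub_sq_pos w Hw).
  set (s := x ^ 2 + y ^ 2).
  set (dE := ((2 * x * y - 2 * s * w) * (1 - w ^ 2) + 2 * w * (2 * x * y * w - s * w ^ 2))
             / (1 - w ^ 2) ^ 2).
  assert (HE : is_derive (fun w => - mehler_exponent x y w) w (- dE)).
  { unfold mehler_exponent. eapply is_derive_eq; [auto_derive; [fold_square; lra | reflexivity]|].
    unfold dE, s. fold_square. field. lra. }
  assert (Hexp := is_derive_comp exp _ w _ _ (is_derive_exp _) HE).
  assert (Hprod := is_derive_mult _ _ _ _ _ (is_derive_sqrt_one_sub_sq w Hw) Hexp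
                     (fun n m => Rmult_comm n m)).
  unfold mehler_closed_inv. eapply is_derive_eq; [exact Hprod|].
  unfold plus, mult, scal; simpl. unfold mult; simpl.
  unfold mehler_ode_coef, dE, s. field. lra.
Qed.

Lemma is_derive_mehler_product (x y t : R) : Rabs t < 1 ->
  is_derive (fun t => PSeries (mehler_coef x y) t * mehler_closed_inv x y t) t 0.
Proof.
  intros Ht. assert (Ht2 := one_sub_sq_pos t Ht).
  assert (HF := is_derive_PSeries (mehler_coef x y) t (mehler_coef_CV_radius x y t Ht)).
  assert (Hprod := is_derive_mult _ _ _ _ _ HF (is_derive_mehler_closed_inv x y t Ht)
                     (fun n m => Rmult_comm n m)).
  eapply is_derive_eq; [exact Hprod|]. unfold plus, mult; simpl.
  assert (Hode := PSeries_mehler_ode x y t Ht).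
  replace (PSeries (PS_derive (mehler_coef x y)) t)
    with (mehler_ode_coef x y t * PSeries (mehler_coef x y) t / (1 - t ^ 2) ^ 2)
    by (rewrite <- Hode; field; lra).
  field. lra.
Qed.

Lemma mehler_formula (x y w : R) : Rabs w < 1 ->
  PSeries (mehler_coef x y) w = exp (mehler_exponent x y w) / sqrt (1 - w ^ 2).
Proof.
  intros Hw.
  assert (Hsegment : forall t, Rmin 0 w <= t <= Rmax 0 w -> Rabs t < 1).
  { intros t Ht. unfold Rmin, Rmax in Ht. apply Rabs_def1; destruct (Rle_dec 0 w);
      destruct (Rcase_abs w); try rewrite Rabs_right in Hw by lra;
      try rewrite Rabs_left in Hw by lra; lra. }
  destruct (MVT_gen (fun t => PSeries (mehler_coef x y) t * mehler_closed_inv x y t) 0 w (fun _ => 0))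
    as [c [_ Hconst]].
  - intros t Ht. apply is_derive_mehler_product, Hsegment. lra.
  - intros t Ht. apply (proj2 (continuity_pt_filterlim _ _)).
    apply (continuous_of_ex_derive (fun t => PSeries (mehler_coef x y) t * mehler_closed_inv x y t)).
    exists 0. now apply is_derive_mehler_product, Hsegment.
  - rewrite PSeries_0, mehler_coef_0 in Hconst. unfold mehler_closed_inv in Hconst.
    replace (mehler_exponent x y 0) with 0 in Hconst by (unfold mehler_exponent; field).
    replace (1 - 0 ^ 2) with 1 in Hconst by ring.
    rewrite sqrt_1, Ropp_0, exp_0, exp_Ropp in Hconst.
    assert (Hw2 := one_sub_sq_pos w Hw). assert (Hr := sqrt_lt_R0 _ Hw2).
    assert (0 < exp (mehler_exponent x y w)) by apply exp_pos.
    apply (Rmult_eq_reg_r (sqrt (1 - w ^ 2) * / exp (mehler_exponent x y w))).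
    + replace (PSeries (mehler_coef x y) w * (sqrt (1 - w ^ 2) * / exp (mehler_exponent x y w)))
        with 1 by lra. field. lra.
    + apply Rmult_integral_contrapositive. split; [lra | apply Rinv_neq_0_compat; lra].
Qed.

(** * Real wavefunctions and their normalisation *)

Lemma ZSeries_R_scal (K : R) (g : Z -> R) : ZSeries_R (fun s => K * g s) = K * ZSeries_R g.
Proof. unfold ZSeries_R. rewrite !Series_scal_l. ring. Qed.

Lemma ZSeries_R_0 : ZSeries_R (fun _ => 0) = 0.
Proof.
  transitivity (ZSeries_R (fun _ => 0 * 0)).
  - f_equal. apply functional_extensionality. intros. ring.
  - rewrite ZSeries_R_scal. ring.
Qed.

Lemma ZSeries_RtoC (a : Z -> Complex.C) (K : R) (g : Z -> R) :
  (forall s, a s = RtoC (K * g s)) -> ZSeries a = RtoC (K * ZSeries_R g).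
Proof.
  intros Ha. unfold ZSeries.
  replace (fun s => Re (a s)) with (fun s => K * g s)
    by (apply functional_extensionality; intros s; now rewrite Ha).
  replace (fun s => Im (a s)) with (fun _ : Z => 0)
    by (apply functional_extensionality; intros s; now rewrite Ha).
  now rewrite ZSeries_R_scal, ZSeries_R_0.
Qed.

Definition normalized (G : R -> R) (x : R) : R := G x / sqrt (RInt_R (fun y => G y ^ 2)).

Lemma normalize_RtoC (psi : wf) (K : R) (G : R -> R) : 0 < K ->
  (forall x, psi x = RtoC (K * G x)) -> forall x, normalize psi x = RtoC (normalized G x).
Proof.
  intros HK Hpsi x. unfold normalize, norm2, normalized.
  replace (fun x => Cabs2 (psi x)) with (fun x => K ^ 2 * G x ^ 2)
    by (apply functional_extensionality; intros y; rewrite Hpsi; unfold Cabs2, RtoC; simpl; ring).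
  rewrite RInt_R_scal, sqrt_mult_alt, sqrt_pow2, Hpsi, <- RtoC_mult by (lra || apply pow2_ge_0 ||
    (apply pow_nonzero; lra)).
  f_equal. rewrite Rinv_mult. unfold Rdiv. set (s := / sqrt _). field. lra.
Qed.

Lemma Sop_ln_normalized_dilate (psi : wf) (G : R -> R) (c x : R) : 0 < c ->
  (forall z, psi z = RtoC (normalized (fun z => G (z / c)) z)) ->
  Sop (ln c) psi x = RtoC (normalized G x).
Proof.
  intros Hc Hpsi. unfold Sop. rewrite Hpsi. unfold normalized.
  rewrite (RInt_R_dilate (fun u => G u ^ 2)), exp_ln, <- RtoC_mult by exact Hc. f_equal.
  replace (exp (ln c / 2)) with (sqrt c).
  - replace (c * x / c) with x by (field; lra).
    rewrite sqrt_mult_alt by lra. assert (0 < sqrt c) by (apply sqrt_lt_R0; lra).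
    unfold Rdiv. rewrite Rinv_mult. set (s := / sqrt (RInt_R (fun u => G u ^ 2))). field. lra.
  - rewrite <- (sqrt_pow2 (exp (ln c / 2))) by (left; apply exp_pos).
    f_equal. replace (exp (ln c / 2) ^ 2) with (exp (ln c / 2 + ln c / 2)) by (rewrite exp_plus; ring).
    replace (ln c / 2 + ln c / 2) with (ln c) by field. now rewrite exp_ln.
Qed.

(** * The three approximate GKP states *)

Definition gkp_exponent (b x y : R) : R :=
  - (cosh b / sinh b) / 2 * (x ^ 2 + y ^ 2) + x * y / sinh b.

Definition gkp_profile (d j : nat) (b x : R) : R :=
  ZSeries_R (fun s => exp (gkp_exponent b x (qpt d j s))).

Lemma cosh_pos (b : R) : 0 < cosh b.
Proof.
  unfold cosh. assert (0 < exp b) by apply exp_pos. assert (0 < exp (- b)) by apply exp_pos. lra.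
Qed.

Lemma exp_lt_1 (b : R) : 0 < b -> exp (- b) < 1.
Proof. intros Hb. rewrite <- exp_0. apply exp_increasing. lra. Qed.

Lemma exp_mult_INR (a : R) (n : nat) : exp (INR n * a) = exp a ^ n.
Proof.
  induction n as [|n IH]; [simpl; now rewrite Rmult_0_l, exp_0|].
  rewrite S_INR, Rmult_plus_distr_r, Rmult_1_l, exp_plus, IH. simpl. ring.
Qed.

Lemma hermite_kernel_term (b x y : R) (n : nat) :
  exp (- b * (INR n + / 2)) * hermite_fn n y * hermite_fn n x
  = exp (- b / 2) * exp (- (x ^ 2 + y ^ 2) / 2) / sqrt PI * (exp (- b) ^ n * mehler_coef x y n).
Proof.
  unfold hermite_fn, mehler_coef.
  assert (HPI : 0 < sqrt PI) by apply sqrt_lt_R0, PI_RGT_0.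
  set (A := 2 ^ n * INR (Factorial.fact n) * sqrt PI).
  assert (HA : 0 < A).
  { apply Rmult_lt_0_compat; [apply Rmult_lt_0_compat; [apply pow_lt; lra | apply INR_fact_lt_0] | lra]. }
  assert (HsA : sqrt A * sqrt A = A) by (apply sqrt_sqrt; lra).
  assert (0 < sqrt A) by (apply sqrt_lt_R0; lra).
  replace (- b * (INR n + / 2)) with (INR n * - b + - b / 2) by field.
  replace (- (x ^ 2 + y ^ 2) / 2) with (- x ^ 2 / 2 + - y ^ 2 / 2) by field.
  rewrite !exp_plus, exp_mult_INR.
  replace (2 ^ n * INR (Factorial.fact n)) with (A / sqrt PI) by (unfold A; field; lra).
  apply (Rmult_eq_reg_r (sqrt A * sqrt A)); [|nra].
  field_simplify; try lra. rewrite pow2_sqrt by lra. field. lra.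
Qed.

Lemma gkp_exponent_mehler (b x y : R) : 0 < b ->
  - (x ^ 2 + y ^ 2) / 2 + mehler_exponent x y (exp (- b)) = gkp_exponent b x y.
Proof.
  intros Hb. unfold mehler_exponent, gkp_exponent, cosh, sinh. rewrite exp_Ropp.
  assert (1 < exp b) by (rewrite <- exp_0; apply exp_increasing; lra).
  field. split; nra.
Qed.

Lemma expN_gkp_kernel (b : R) : 0 < b ->
  exists K, 0 < K /\ forall y x, expN b y x = RtoC (K * exp (gkp_exponent b x y)).
Proof.
  intros Hb.
  assert (Hw : Rabs (exp (- b)) < 1)
    by (rewrite Rabs_pos_eq; [apply exp_lt_1 | left; apply exp_pos]; lra).
  assert (Hw2 := one_sub_sq_pos _ Hw).
  assert (HPI : 0 < sqrt PI) by apply sqrt_lt_R0, PI_RGT_0.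
  assert (Hs : 0 < sqrt (1 - exp (- b) ^ 2)) by now apply sqrt_lt_R0.
  exists (exp (- b / 2) / (sqrt PI * sqrt (1 - exp (- b) ^ 2))).
  split; [apply Rdiv_lt_0_compat; [apply exp_pos | nra]|].
  intros y x. unfold expN. f_equal.
  assert (Hser : Series (fun n => exp (- b * (INR n + / 2)) * hermite_fn n y * hermite_fn n x)
                 = exp (- b / 2) * exp (- (x ^ 2 + y ^ 2) / 2) / sqrt PI
                   * PSeries (mehler_coef x y) (exp (- b))).
  { unfold PSeries. rewrite <- Series_scal_l. apply Series_ext. intros n.
    rewrite hermite_kernel_term. change (scal (pow_n (exp (- b)) n) (mehler_coef x y n))
      with (pow_n (exp (- b)) n * mehler_coef x y n). rewrite <- pow_n_pow. ring. }
  rewrite Hser, (mehler_formula x y _ Hw), <- (gkp_exponent_mehler b x y Hb), exp_plus.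
  field. lra.
Qed.

Lemma Vavg_gauss2_integrand (g dl x y r : R) :
  Cmult (RtoC (gauss2 g dl r (x - y))) (Cmult (cis (- r * (x - y) / 2)) (cis (r * x)))
  = (/ (2 * PI * g * dl) * exp (- (x - y) ^ 2 / (2 * dl ^ 2)) * gauss_cos (/ (2 * g ^ 2)) ((x + y) / 2) r,
     / (2 * PI * g * dl) * exp (- (x - y) ^ 2 / (2 * dl ^ 2)) * gauss_sin (/ (2 * g ^ 2)) ((x + y) / 2) r).
Proof.
  unfold gauss2, gauss_cos, gauss_sin, cis, Cmult, RtoC; cbn [fst snd].
  replace (- r ^ 2 / (2 * g ^ 2) - (x - y) ^ 2 / (2 * dl ^ 2))
    with (- (x - y) ^ 2 / (2 * dl ^ 2) + - / (2 * g ^ 2) * r ^ 2) by (unfold Rdiv; ring).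
  replace (cos (- r * (x - y) / 2) * cos (r * x) - sin (- r * (x - y) / 2) * sin (r * x))
    with (cos (- r * (x - y) / 2 + r * x)) by (rewrite cos_plus; ring).
  replace (cos (- r * (x - y) / 2) * sin (r * x) + sin (- r * (x - y) / 2) * cos (r * x))
    with (sin (- r * (x - y) / 2 + r * x)) by (rewrite sin_plus; ring).
  replace (- r * (x - y) / 2 + r * x) with ((x + y) / 2 * r) by field.
  rewrite exp_plus. f_equal; ring.
Qed.

Lemma Vavg_gauss2_closed_form (g dl J0 y x : R) : 0 < g ->
  (forall k, is_RInt_gen (gauss_cos (/ (2 * g ^ 2)) k) at_minfty at_pinfty
               (J0 * exp (- k ^ 2 / (4 * / (2 * g ^ 2))))) ->
  Vavg (gauss2 g dl) y x =
  RtoC (/ (2 * PI * g * dl) * J0 * exp (- (x - y) ^ 2 / (2 * dl ^ 2) - g ^ 2 * (x + y) ^ 2 / 8)).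
Proof.
  intros Hg HJ.
  set (a := / (2 * g ^ 2)). assert (Ha : 0 < a) by (apply Rinv_0_lt_compat; nra).
  set (k := (x + y) / 2).
  set (C := / (2 * PI * g * dl) * exp (- (x - y) ^ 2 / (2 * dl ^ 2))).
  unfold Vavg, CInt_R.
  replace (fun r => Re (Cmult (RtoC (gauss2 g dl r (x - y)))
                               (Cmult (cis (- r * (x - y) / 2)) (cis (r * x)))))
    with (fun r => C * gauss_cos a k r)
    by (apply functional_extensionality; intros r; now rewrite Vavg_gauss2_integrand).
  replace (fun r => Im (Cmult (RtoC (gauss2 g dl r (x - y)))
                               (Cmult (cis (- r * (x - y) / 2)) (cis (r * x)))))
    with (fun r => C * gauss_sin a k r)
    by (apply functional_extensionality; intros r; now rewrite Vavg_gauss2_integrand).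
  unfold RInt_R.
  rewrite (is_RInt_gen_unique (fun r => C * gauss_cos a k r) _ (is_RInt_gen_scal _ C _ (HJ k))).
  rewrite (is_RInt_gen_unique (fun r => C * gauss_sin a k r) _
             (is_RInt_gen_scal _ C _ (is_RInt_gen_gauss_sin a Ha k))).
  unfold RtoC. apply (f_equal2 pair); [|change (C * 0 = 0); ring].
  change (C * (J0 * exp (- k ^ 2 / (4 * a)))
          = / (2 * PI * g * dl) * J0 * exp (- (x - y) ^ 2 / (2 * dl ^ 2) - g ^ 2 * (x + y) ^ 2 / 8)).
  replace (- (x - y) ^ 2 / (2 * dl ^ 2) - g ^ 2 * (x + y) ^ 2 / 8)
    with (- (x - y) ^ 2 / (2 * dl ^ 2) + - k ^ 2 / (4 * a))
    by (unfold Rminus; f_equal; unfold k, a; field; lra).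
  unfold C. rewrite exp_plus. ring.
Qed.

Lemma gkp_exponent_gauss2 (b g dl x y : R) : 0 < b ->
  g ^ 2 = 2 * tanh (b / 2) -> dl ^ 2 = 2 * tanh (b / 2) ->
  - (x - y) ^ 2 / (2 * dl ^ 2) - g ^ 2 * (x + y) ^ 2 / 8 = gkp_exponent b x y.
Proof.
  intros Hb Hg Hdl. rewrite Hg, Hdl.
  unfold gkp_exponent, tanh, sinh, cosh. rewrite !exp_Ropp.
  replace (exp b) with (exp (b / 2) ^ 2)
    by (replace b with (b / 2 + b / 2) at 2 by field; rewrite exp_plus; ring).
  assert (Hu : 1 < exp (b / 2)) by (rewrite <- exp_0; apply exp_increasing; lra).
  set (u := exp (b / 2)) in *.
  assert (1 < u * u) by nra. assert (1 < (u * u) ^ 2) by nra.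
  field. repeat split; nra.
Qed.

Lemma gkp_exponent_squeezed (b kappa Delta z q : R) : 0 < b -> 0 < Delta ->
  kappa ^ 2 = tanh b -> Delta ^ 2 = sinh b * cosh b ->
  - / 2 * kappa ^ 2 * q ^ 2 + - (exp (- ln Delta) * (z - q)) ^ 2 / 2
  = gkp_exponent b (z / cosh b) q.
Proof.
  intros Hb HDelta Hk HD.
  rewrite exp_Ropp, exp_ln by exact HDelta.
  replace (- (/ Delta * (z - q)) ^ 2 / 2) with (- (z - q) ^ 2 / (2 * Delta ^ 2)) by (field; lra).
  rewrite Hk, HD. unfold gkp_exponent, tanh, sinh, cosh. rewrite !exp_Ropp.
  assert (1 < exp b) by (rewrite <- exp_0; apply exp_increasing; lra).
  field. repeat split; nra.
Qed.

Lemma sqrt_one_add_tanh_sinh_cosh (b : R) : sqrt (1 + tanh b * (sinh b * cosh b)) = cosh b.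
Proof.
  replace (1 + tanh b * (sinh b * cosh b)) with (cosh b ^ 2).
  - apply sqrt_pow2. left. apply cosh_pos.
  - unfold tanh, sinh, cosh. rewrite !exp_Ropp.
    assert (0 < exp b) by apply exp_pos. field. split; nra.
Qed.

Lemma Vavg_gauss2_gkp_kernel (b g dl : R) : 0 < b -> 0 < g -> 0 < dl ->
  g ^ 2 = 2 * tanh (b / 2) -> dl ^ 2 = 2 * tanh (b / 2) ->
  exists K, 0 < K /\ forall y x, Vavg (gauss2 g dl) y x = RtoC (K * exp (gkp_exponent b x y)).
Proof.
  intros Hb Hg Hdl Hgt Hdlt.
  destruct (is_RInt_gen_gauss_cos (/ (2 * g ^ 2))) as [J0 [HJ0 HJ]];
    [apply Rinv_0_lt_compat; nra|].
  exists (/ (2 * PI * g * dl) * J0). split.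
  - apply Rmult_lt_0_compat; [apply Rinv_0_lt_compat|exact HJ0].
    assert (HPI := PI_RGT_0).
    apply Rmult_lt_0_compat; [apply Rmult_lt_0_compat; [lra | exact Hg] | exact Hdl].
  - intros y x. rewrite (Vavg_gauss2_closed_form g dl J0 y x Hg HJ).
    now rewrite (gkp_exponent_gauss2 b g dl x y Hb Hgt Hdlt).
Qed.

Lemma sqrt_alpha_mul_pos (d : nat) : (1 <= d)%nat -> 0 < sqrt (alpha d * INR d).
Proof.
  intros Hd. apply sqrt_lt_R0.
  assert (HdR : 1 <= INR d) by exact (le_INR 1 d Hd).
  apply Rmult_lt_0_compat; [|lra].
  apply sqrt_lt_R0, Rdiv_lt_0_compat; [assert (HPI := PI_RGT_0)|]; lra.
Qed.

Lemma apply_ideal_normalized (d j : nat) (b : R) (A : R -> wf) : (1 <= d)%nat ->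
  (exists K, 0 < K /\ forall y x, A y x = RtoC (K * exp (gkp_exponent b x y))) ->
  forall x, normalize (apply_ideal d j A) x = RtoC (normalized (gkp_profile d j b) x).
Proof.
  intros Hd [K [HK HA]].
  apply (normalize_RtoC _ (sqrt (alpha d * INR d) * K));
    [apply Rmult_lt_0_compat; [now apply sqrt_alpha_mul_pos | exact HK]|].
  intros y. unfold apply_ideal.
  rewrite (ZSeries_RtoC _ K (fun s => exp (gkp_exponent b y (qpt d j s)))) by (intros s; apply HA).
  rewrite <- RtoC_mult. unfold gkp_profile. f_equal. ring.
Qed.

Lemma gkp1_normalized (d j : nat) (b kappa Delta : R) : 0 < b -> 0 < Delta ->
  kappa ^ 2 = tanh b -> Delta ^ 2 = sinh b * cosh b ->
  forall z, gkp1 d j kappa Delta z = RtoC (normalized (fun z => gkp_profile d j b (z / cosh b)) z).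
Proof.
  intros Hb HDelta Hk HD. unfold gkp1.
  apply (normalize_RtoC _ (exp (- ln Delta / 2) * / Rpower PI (1 / 4))).
  - apply Rmult_lt_0_compat; [apply exp_pos | apply Rinv_0_lt_compat, exp_pos].
  - intros z. unfold gkp1_un, gkp_profile. apply ZSeries_RtoC. intros s.
    unfold Xop, Sop, vac. rewrite <- !RtoC_mult. f_equal.
    rewrite <- (gkp_exponent_squeezed b kappa Delta z (qpt d j s) Hb HDelta Hk HD), exp_plus. ring.
Qed.

Theorem theorem1 (d j : nat) (beta kappa Delta gamma delta : R) :
  (1 <= d)%nat -> (j < d)%nat -> 0 < beta ->
  0 < kappa -> 0 < Delta -> 0 < gamma -> 0 < delta ->
  kappa ^ 2 = gamma ^ 2 / lam gamma delta ->
  gamma ^ 2 / lam gamma delta = tanh beta ->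
  Delta ^ 2 = delta ^ 2 / lam gamma delta
              * / (1 - gamma ^ 2 * delta ^ 2 / (2 * lam gamma delta)) ^ 2 ->
  delta ^ 2 / lam gamma delta
    * / (1 - gamma ^ 2 * delta ^ 2 / (2 * lam gamma delta)) ^ 2
    = sinh beta * cosh beta ->
  gamma ^ 2 = delta ^ 2 ->
  delta ^ 2 = 2 * tanh (beta / 2) ->
  forall x : R,
    Sop (ln (sqrt (1 + kappa ^ 2 * Delta ^ 2))) (gkp1 d j kappa Delta) x
      = gkp2 d j gamma delta x
    /\ gkp2 d j gamma delta x = gkp3 d j beta x.
Proof.
  intros Hd _ Hbeta _ HDelta Hgamma Hdelta Hk1 Hk2 HD1 HD2 Hgd Hdt x.
  assert (Hk : kappa ^ 2 = tanh beta) by now rewrite Hk1.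
  assert (HD : Delta ^ 2 = sinh beta * cosh beta) by now rewrite HD1.
  assert (Hgt : gamma ^ 2 = 2 * tanh (beta / 2)) by now rewrite Hgd.
  assert (H2 : gkp2 d j gamma delta x = RtoC (normalized (gkp_profile d j beta) x))
    by (apply apply_ideal_normalized, Vavg_gauss2_gkp_kernel; assumption).
  split.
  - rewrite H2, Hk, HD, sqrt_one_add_tanh_sinh_cosh.
    apply Sop_ln_normalized_dilate; [apply cosh_pos|].
    now apply gkp1_normalized.
  - rewrite H2. symmetry.
    apply apply_ideal_normalized, expN_gkp_kernel; assumption.
Qed.
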